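(* Let $N\ge 1$, let $q\in\mathbb{C}\setminus\{0,\pm1\}$ be generic (i.e. $q^k\neq 1$ for all integers $k>0$), and let $R\in Mat_{N\times N}(\mathbb{C})^{\otimes 2}$ be a skew-invertible Hecke $R$-matrix. Let $W(R)$ be the quantum Weyl algebra with generating matrices $M$ and $D$, and put $\hat L = MD$. Then for every integer $n\ge 1$ the following identity holds in $Mat_{N\times N}(\mathbb{C})^{\otimes n}\otimes W(R)$: $$\hat L_{\overline{1}} \left(\hat L_{\overline{2}} + \frac{J_{2}^{-1} -1}{q-q^{-1}}\right) \cdots \left(\hat L_{\overline{n}} + \frac{J_{n}^{-1} -1}{q-q^{-1}}\right) = M_{\overline{1}} \cdots M_{\overline{n}}\, D_{\overline{n}} \cdots D_{\overline{1}}\, J_{1}^{-1} \cdots J_{n}^{-1}.$$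
   Context: Notation: for a matrix $A\in Mat_{N\times N}(\mathbb{C})\otimes U$ (entries in some vector space/algebra $U$), $A_i=\mathbb{E}\otimes\cdots\otimes A\otimes\cdots\otimes\mathbb{E}$ (with $A$ in the $i$-th tensor factor, $\mathbb{E}$ the identity matrix elsewhere); for $R\in Mat_{N\times N}(\mathbb{C})^{\otimes 2}$, $R_{ij}$ denotes $R$ acting in tensor factors $i,j$, and $R_i=R_{i\,i+1}$. $P_{12}$ is the permutation matrix, $P_{kl}^{mn}=\delta_k^n\delta_l^m$, and $Tr_{(k)}$ is the trace in the $k$-th tensor factor. A skew-invertible Hecke $R$-matrix is an invertible $R\in Mat_{N\times N}(\mathbb{C})^{\otimes 2}$ satisfying $R_1R_2R_1=R_2R_1R_2$, $R^2=1+(q-q^{-1})R$, and for which there is a matrix $\Psi$ with $Tr_{(2)}(R_{12}\Psi_{23})=P_{13}=Tr_{(2)}(\Psi_{12}R_{23})$. For an $N\times N$ matrix $A$ put $A_{\overline{1}}=A_1$ and $A_{\overline{k}}=R_{k-1}\cdots R_1A_1R_1^{-1}\cdots R_{k-1}^{-1}$ for $k>1$. The Reflection Equation algebra $M(R)$ is the unital associative algebra generated by entries $m_i^j$ of $M=\|m_i^j\|_{1\le i,j\le N}$ subject to $R_{12}M_1R_{12}M_1=M_1R_{12}M_1R_{12}$; $D(R^{-1})$ is the analogous algebra generated by the entries of a matrix $D$ with $R$ replaced by $R^{-1}$. The quantum Weyl algebra $W(R)$ is the quotient of the free product of $M(R)$ and $D(R^{-1})$ by the relations $D_1M_{\overline{2}}=R_1^{-1}+M_{\overline{2}}D_1R_1^{-2}$.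 $\hat L=MD$ is the matrix product of $M$ and $D$. $J_1=1$ and $J_k=R_{k-1}\cdots R_2R_1^2R_2\cdots R_{k-1}$ for $k>1$ (images of the Jucys–Murphy elements of the Hecke algebra); in the formula, $1$ denotes the identity matrix. *)

From HB Require Import structures.
From mathcomp Require Import all_boot all_order all_algebra.
From mathcomp Require Import complex.
From mathcomp Require Import Rstruct.
From Stdlib Require Rdefinitions.
Set Implicit Arguments. Unset Strict Implicit. Unset Printing Implicit Defensive.
Import Order.TTheory GRing.Theory Num.Theory.
Local Open Scope ring_scope.

Definition C : numClosedFieldType := (Rdefinitions.R)[i].

Section TensorOps.
Variable N : nat.

Definition idx (n : nat) := n.-tuple 'I_N.

(* An element of Mat_{NxN}(C)^{(x) n} (x) V, i.e. an N^n x N^n matrix with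
   entries in V, rows/columns indexed by multi-indices. *)
Definition op (V : Type) (n : nat) := idx n -> idx n -> V.

Variable V : pzRingType.

Definition opmul n (X Y : op V n) : op V n :=
  fun a b => \sum_(c : idx n) X a c * Y c b.
Definition opadd n (X Y : op V n) : op V n := fun a b => X a b + Y a b.
Definition opone n : op V n := fun a b => (a == b)%:R.
Definition oprod n (s : seq (op V n)) : op V n := foldr (@opmul n) (@opone n) s.

(* X_p : the N x N matrix X placed in tensor factor p (0-based), identity elsewhere *)
Definition emb1 n (p : 'I_n) (X : 'I_N -> 'I_N -> V) : op V n :=
  fun a b => if [forall m : 'I_n, (m != p) ==> (tnth a m == tnth b m)]
             then X (tnth a p) (tnth b p) else 0.

(* Y_{p p'} : a matrix Y in Mat^{(x)2} (entry Y i1 i2 j1 j2 = row (i1,i2),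
   column (j1,j2)) acting in tensor factors p, p', identity elsewhere *)
Definition emb2 n (p p' : 'I_n) (Y : 'I_N -> 'I_N -> 'I_N -> 'I_N -> V) : op V n :=
  fun a b => if [forall m : 'I_n, ((m != p) && (m != p')) ==> (tnth a m == tnth b m)]
             then Y (tnth a p) (tnth a p') (tnth b p) (tnth b p') else 0.

(* On n.+1 tensor factors: Y_k := Y_{k k+1} (1-based k, 1 <= k <= n). *)
Definition Rk n (Y : 'I_N -> 'I_N -> 'I_N -> 'I_N -> V) (k : nat) : op V n.+1 :=
  emb2 (inord k.-1) (inord k) Y.

(* X_{\bar k} = R_{k-1} ... R_1 X_1 R_1^{-1} ... R_{k-1}^{-1}  (Ri = R^{-1}) *)
Definition bar n (R Ri : 'I_N -> 'I_N -> 'I_N -> 'I_N -> V)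
    (X : 'I_N -> 'I_N -> V) (k : nat) : op V n.+1 :=
  oprod ([seq @Rk n R j | j <- rev (iota 1 k.-1)]
         ++ emb1 (inord 0) X :: [seq @Rk n Ri j | j <- iota 1 k.-1]).

(* J_k = R_{k-1} ... R_2 R_1^2 R_2 ... R_{k-1}, J_1 = 1 *)
Definition Jk n (R : 'I_N -> 'I_N -> 'I_N -> 'I_N -> V) (k : nat) : op V n.+1 :=
  oprod ([seq @Rk n R j | j <- rev (iota 1 k.-1)] ++ [seq @Rk n R j | j <- iota 1 k.-1]).

(* J_k^{-1} = R_{k-1}^{-1} ... R_1^{-2} ... R_{k-1}^{-1}, given Ri = R^{-1} *)
Definition Jkinv n (Ri : 'I_N -> 'I_N -> 'I_N -> 'I_N -> V) (k : nat) : op V n.+1 :=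
  @Jk n Ri k.

End TensorOps.
Arguments opone {N V n}.
Arguments Rk {N V} n Y k.
Arguments bar {N V} n R Ri X k.
Arguments Jk {N V} n R k.
Arguments Jkinv {N V} n Ri k.

Definition rmat N := 'I_N -> 'I_N -> 'I_N -> 'I_N -> C.

Definition liftR N (A : algType C) (R : rmat N) : 'I_N -> 'I_N -> 'I_N -> 'I_N -> A :=
  fun i1 i2 j1 j2 => (R i1 i2 j1 j2)%:A.

Definition ptrace2 N (X : op N C 3) : rmat N :=
  fun i1 i3 j1 j3 => \sum_(c : 'I_N) X [tuple i1; c; i3] [tuple j1; c; j3].

Definition Pmat N : rmat N := fun i1 i2 j1 j2 => ((i1 == j2) && (i2 == j1))%:R.

Definition skew_invertible_Hecke N (q : C) (R Ri : rmat N) : Prop :=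
  [/\
      (forall a b, opmul (emb2 (inord 0) (inord 1) R) (emb2 (inord 0) (inord 1) Ri) a b
                   = @opone N C 2 a b),
      (forall a b, opmul (emb2 (inord 0) (inord 1) Ri) (emb2 (inord 0) (inord 1) R) a b
                   = @opone N C 2 a b),
      (forall a b, oprod [:: Rk 2 R 1; Rk 2 R 2; Rk 2 R 1] a b
                   = oprod [:: Rk 2 R 2; Rk 2 R 1; Rk 2 R 2] a b),
      (forall a b, opmul (Rk 1 R 1) (Rk 1 R 1) a b
                   = @opone N C 2 a b + (q - q^-1) * Rk 1 R 1 a b) &
      (exists Psi : rmat N,
         (forall i1 i3 j1 j3,
            ptrace2 (opmul (emb2 (inord 0) (inord 1) R) (emb2 (inord 1) (inord 2) Psi))
              i1 i3 j1 j3 = Pmat i1 i3 j1 j3) /\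
         (forall i1 i3 j1 j3,
            ptrace2 (opmul (emb2 (inord 0) (inord 1) Psi) (emb2 (inord 1) (inord 2) R))
              i1 i3 j1 j3 = Pmat i1 i3 j1 j3))].

Definition weyl_relations N (R Ri : rmat N) (A : algType C) (M D : 'I_N -> 'I_N -> A) : Prop :=
  let R12 := emb2 (inord 0) (inord 1) (liftR A R) in
  let Ri12 := emb2 (inord 0) (inord 1) (liftR A Ri) in
  let M1 := emb1 (n := 2) (inord 0) M in
  let D1 := emb1 (n := 2) (inord 0) D in
  let M2 := bar 1 (liftR A R) (liftR A Ri) M 2 in
  [/\
      (forall a b, oprod [:: R12; M1; R12; M1] a b = oprod [:: M1; R12; M1; R12] a b),
      (forall a b, oprod [:: Ri12; D1; Ri12; D1] a b = oprod [:: D1; Ri12; D1; Ri12] a b) &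
      (forall a b, opmul D1 M2 a b = Ri12 a b + oprod [:: M2; D1; Ri12; Ri12] a b)].

Definition Lhat N (A : algType C) (M D : 'I_N -> 'I_N -> A) : 'I_N -> 'I_N -> A :=
  fun i j => \sum_(k : 'I_N) M i k * D k j.

Definition weyl_lhs N (q : C) (R Ri : rmat N) (A : algType C) (M D : 'I_N -> 'I_N -> A)
    (n : nat) : op N A n.+1 :=
  let Lb := bar n (liftR A R) (liftR A Ri) (Lhat M D) in
  let c k : op N A n.+1 := fun a b =>
      (q - q^-1)^-1 *: (Jkinv n (liftR A Ri) k a b - @opone N A n.+1 a b) in
  opmul (Lb 1) (oprod [seq opadd (Lb k) (c k) | k <- iota 2 n]).

Definition weyl_rhs N (R Ri : rmat N) (A : algType C) (M D : 'I_N -> 'I_N -> A)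
    (n : nat) : op N A n.+1 :=
  oprod ([seq bar n (liftR A R) (liftR A Ri) M k | k <- iota 1 n.+1]
         ++ [seq bar n (liftR A R) (liftR A Ri) D k | k <- rev (iota 1 n.+1)]
         ++ [seq Jkinv n (liftR A Ri) k | k <- iota 1 n.+1]).

Arguments weyl_lhs {N} q R Ri {A} M D n.
Arguments weyl_rhs {N} R Ri {A} M D n.

(** All the identities take place in the ring of N^(n+1) x N^(n+1) matrices
    over W(R).  There the R_k generate a quotient of the Hecke algebra, M_1 and
    D_1 commute with R_k for k >= 2, and q - q^-1 is a central unit, which is
    all the proof uses.  Conjugation by R_k R_(k+1) maps M_(bar k), D_(bar k)
    and R_k to M_(bar k+1), D_(bar k+1) and R_(k+1), so the Weyl relation
    D_(bar k) M_(bar k+1) = R_k^-1 + M_(bar k+1) D_(bar k) R_k^-2 and the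
    reflection equation for D_(bar k) and R_k^-1 hold for every k.  With
    Delta_m = D_(bar m) ... D_(bar 1) and R_k = R_k^-1 + (q - q^-1), induction on
    m shows that Delta_m J_(m+1)^-1 commutes with D_(bar m+1) and that
      Delta_m (L_(bar m+1) + (J_(m+1)^-1 - 1)/(q - q^-1))
        = L_(bar m+1) Delta_m J_(m+1)^-1,   where L_(bar k) = M_(bar k) D_(bar k).
    Hence, by induction again, the product of the first m factors of the
    left-hand side is M_(bar 1) ... M_(bar m) Delta_m J_1^-1 ... J_m^-1: the
    next factor and J_(m+1)^-1 commute with J_1^-1 ... J_m^-1, and the identity
    above moves Delta_m past the next factor. *)

From HB Require Import structures.
From mathcomp Require Import all_boot all_order all_algebra.
From mathcomp Require Import zify.
From Stdlib Require Import FunctionalExtensionality.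
Import GRing.Theory.
Local Open Scope ring_scope.

Set Implicit Arguments. Unset Strict Implicit. Unset Printing Implicit Defensive.

(** * Hecke and Weyl relations in an arbitrary ring *)

Section RingFacts.
Variable S : pzRingType.
Implicit Types x y z xi yi : S.

Lemma linv_rinv_eq x xl xr : xl * x = 1 -> x * xr = 1 -> xl = xr.
Proof. by move=> hl hr; rewrite -[xl]mulr1 -hr mulrA hl mul1r. Qed.

Lemma commr_inv x y yi : y * yi = 1 -> yi * y = 1 -> GRing.comm x y -> GRing.comm x yi.
Proof.
move=> hy hy' cxy.
by rewrite /GRing.comm -[x * yi]mul1r -hy' -mulrA (mulrA y) -cxy -!mulrA hy mulr1.
Qed.

Lemma mulr_cancel x y z : x * y = 1 -> z * x * y = z.
Proof. by move=> h; rewrite -mulrA h mulr1. Qed.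

Lemma prodr_rcons (I : Type) (s : seq I) i (F : I -> S) :
  \prod_(j <- rcons s i) F j = \prod_(j <- s) F j * F i.
Proof. exact: big_rcons. Qed.

Section Braid.
Variables x y xi yi : S.
Hypotheses (hx : x * xi = 1) (hx' : xi * x = 1) (hy : y * yi = 1) (hy' : yi * y = 1).
Hypothesis braid : x * y * x = y * x * y.

Lemma braid_conj : x * y * xi = yi * x * y.
Proof.
transitivity (yi * (y * x * y) * xi); first by rewrite !mulrA hy' mul1r.
by rewrite -braid !mulrA mulr_cancel.
Qed.

Lemma braid_conjV : x * yi * xi = yi * xi * y.
Proof.
apply: (linv_rinv_eq (x := x * y * xi)).
  by rewrite -!mulrA (mulrA xi x) hx' mul1r (mulrA yi y) hy' mul1r hx.
rewrite braid_conj.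
by rewrite -!mulrA (mulrA y yi) hy mul1r (mulrA x xi) hx mul1r hy'.
Qed.

Lemma braidV : xi * yi * xi = yi * xi * yi.
Proof.
apply: (linv_rinv_eq (x := x * y * x)); last rewrite braid.
  by rewrite -!mulrA (mulrA xi x) hx' mul1r (mulrA yi y) hy' mul1r hx'.
by rewrite -!mulrA (mulrA y yi) hy mul1r (mulrA x xi) hx mul1r hy.
Qed.
End Braid.

Section Conjugation.
Variables u ui : S.
Hypotheses (hu : u * ui = 1) (hu' : ui * u = 1).

Definition conjr x := u * x * ui.

Lemma conjrM x y : conjr (x * y) = conjr x * conjr y.
Proof. by rewrite /conjr !mulrA -(mulrA _ ui u) hu' mulr1. Qed.

Lemma conjrD x y : conjr (x + y) = conjr x + conjr y.
Proof. by rewrite /conjr mulrDr mulrDl. Qed.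

Lemma conjr_intertwine x y : u * x = y * u -> conjr x = y.
Proof. by move=> h; rewrite /conjr h mulr_cancel. Qed.
End Conjugation.
End RingFacts.

Lemma iotaSr m k : iota m k.+1 = rcons (iota m k) (m + k)%N.
Proof. by rewrite -cats1 -addn1 iotaD. Qed.

(* [r k] and [ri k] stand for R_k and R_k^-1 (1 <= k <= n), [m] and [d] for M_1
   and D_1, [c] for q - q^-1 and [ic] for its inverse. *)
Section HeckeWeyl.
Variables (S : pzRingType) (n : nat).
Variables (r ri : nat -> S) (m d c ic : S).
Hypothesis r_rV : forall k, (0 < k <= n)%N -> r k * ri k = 1.
Hypothesis rV_r : forall k, (0 < k <= n)%N -> ri k * r k = 1.
Hypothesis r_hecke : forall k, (0 < k <= n)%N -> r k * r k = 1 + c * r k.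
Hypothesis r_braid :
  forall k, (0 < k)%N -> (k < n)%N -> r k * r k.+1 * r k = r k.+1 * r k * r k.+1.
Hypothesis r_far : forall j k, (0 < j)%N -> (j.+1 < k <= n)%N -> GRing.comm (r j) (r k).
Hypothesis m_r : forall k, (1 < k <= n)%N -> GRing.comm m (r k).
Hypothesis d_r : forall k, (1 < k <= n)%N -> GRing.comm d (r k).
Hypothesis c_central : forall x, GRing.comm c x.
Hypothesis ic_central : forall x, GRing.comm ic x.
Hypothesis c_ic : c * ic = 1.
Hypothesis weyl_rel :
  (0 < n)%N -> d * (r 1 * m * ri 1) = ri 1 + r 1 * m * ri 1 * d * ri 1 * ri 1.
Hypothesis refl_d : (0 < n)%N -> ri 1 * d * ri 1 * d = d * ri 1 * d * ri 1.

Definition hbar X k :=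
  \prod_(x <- [seq r j | j <- rev (iota 1 k.-1)] ++ X :: [seq ri j | j <- iota 1 k.-1]) x.
Definition hJinv k :=
  \prod_(x <- [seq ri j | j <- rev (iota 1 k.-1)] ++ [seq ri j | j <- iota 1 k.-1]) x.

Lemma hbar1 X : hbar X 1 = X.
Proof. by rewrite /hbar /= big_seq1. Qed.

Lemma hbarS X k : (0 < k)%N -> hbar X k.+1 = r k * hbar X k * ri k.
Proof.
case: k => // k _; rewrite /hbar !succnK (iotaSr 1 k) add1n rev_rcons !map_rcons /= big_cons.
by rewrite -rcons_cons -rcons_cat prodr_rcons !mulrA.
Qed.

Lemma hJinv1 : hJinv 1 = 1.
Proof. by rewrite /hJinv /= big_nil. Qed.

Lemma hJinvS k : (0 < k)%N -> hJinv k.+1 = ri k * hJinv k * ri k.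
Proof.
case: k => // k _; rewrite /hJinv !succnK (iotaSr 1 k) add1n rev_rcons !map_rcons /= big_cons.
by rewrite -rcons_cat prodr_rcons !mulrA.
Qed.

Lemma rV_far j k : (0 < j)%N -> (j.+1 < k <= n)%N -> GRing.comm (ri j) (ri k).
Proof.
move=> hj hjk; have hj' : (0 < j <= n)%N by lia.
have hk : (0 < k <= n)%N by lia.
apply/commr_sym/(commr_inv (r_rV hj') (rV_r hj'))/commr_sym.
exact/(commr_inv (r_rV hk) (rV_r hk))/r_far.
Qed.

Lemma r_rV_far j k : (0 < j)%N -> (j.+1 < k <= n)%N -> GRing.comm (r j) (ri k).
Proof.
move=> hj hjk; have hk : (0 < k <= n)%N by lia.
exact/(commr_inv (r_rV hk) (rV_r hk))/r_far.
Qed.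

Lemma rV_r_far j k : (0 < j)%N -> (j.+1 < k <= n)%N -> GRing.comm (ri j) (r k).
Proof.
move=> hj hjk; have hj' : (0 < j <= n)%N by lia.
exact/commr_sym/(commr_inv (r_rV hj') (rV_r hj'))/commr_sym/r_far.
Qed.

Lemma hecke_rV k : (0 < k <= n)%N -> r k = ri k + c.
Proof.
move=> hk; rewrite -[r k]mulr1 -(r_rV hk) mulrA r_hecke // mulrDl mul1r.
by rewrite -mulrA r_rV // mulr1.
Qed.

Lemma hbarM X Y k : (0 < k <= n.+1)%N -> hbar (X * Y) k = hbar X k * hbar Y k.
Proof.
elim: k => // -[_ _|k IH hk]; first by rewrite !hbar1.
have hk1 : (0 < k.+1 <= n)%N := hk.
rewrite !(hbarS _ (k := k.+1)) // IH; last exact: leqW hk1.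
by rewrite !mulrA (mulr_cancel _ (rV_r hk1)).
Qed.

Section HbarCommutation.
Variable X : S.
Hypothesis X_r : forall k, (1 < k <= n)%N -> GRing.comm X (r k).

Lemma hbar_far k j : (0 < k)%N -> (k < j <= n)%N -> GRing.comm (hbar X k) (r j).
Proof.
elim: k j => // -[_ j _ hj|k IH j _ hj]; first by rewrite hbar1; apply: X_r.
rewrite hbarS // /GRing.comm -!mulrA (rV_r_far (j := k.+1) (k := j)); try lia.
by rewrite (mulrA (hbar X k.+1)) IH; try lia; rewrite !mulrA (r_far (j := k.+1)); try lia.
Qed.

Lemma r_hbar k : (0 < k <= n)%N -> r k * hbar X k = hbar X k.+1 * r k.
Proof. by move=> hk; rewrite hbarS; [rewrite mulr_cancel ?rV_r | lia]. Qed.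

Lemma hbar_near k j : (0 < j)%N -> (j.+1 < k <= n.+1)%N -> GRing.comm (hbar X k) (r j).
Proof.
elim: k j => // k IH j hj hjk; have hk0 : (0 < k)%N by lia.
case: (ltnP j.+1 k) => hjk'.
  rewrite hbarS // /GRing.comm -!mulrA -(r_rV_far (j := j) (k := k)); try lia.
  by rewrite (mulrA (hbar X k)) IH; try lia; rewrite !mulrA (r_far (j := j)); try lia.
have -> : k = j.+1 by lia.
have hj1 : (0 < j.+1 <= n)%N by lia.
have hj0 : (0 < j <= n)%N by lia.
rewrite !hbarS // /GRing.comm !mulrA r_braid; try lia.
rewrite -(mulrA _ (r j.+1) (hbar X j)) -hbar_far; try lia.
set P := r j.+1 * r j * hbar X j.
rewrite !mulrA -(mulrA (P * r j.+1) (ri j) (ri j.+1)) -(mulrA P (r j.+1)) (mulrA (r j.+1)).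
have br : r j.+1 * r j * r j.+1 = r j * r j.+1 * r j by rewrite r_braid //; lia.
by rewrite (braid_conjV (r_rV hj1) (rV_r hj1) (r_rV hj0) (rV_r hj0) br) !mulrA.
Qed.

Lemma hbar_shift k : (0 < k)%N -> (k < n)%N ->
  r k * r k.+1 * hbar X k = hbar X k.+1 * (r k * r k.+1).
Proof.
move=> h0 h1; rewrite -mulrA -(hbar_far (k := k) (j := k.+1)); try lia.
by rewrite mulrA r_hbar ?mulrA //; lia.
Qed.

Lemma hbar_shiftS k : (0 < k)%N -> (k < n)%N ->
  r k * r k.+1 * hbar X k.+1 = hbar X k.+2 * (r k * r k.+1).
Proof.
move=> h0 h1; rewrite -mulrA r_hbar; last lia.
by rewrite mulrA -hbar_near ?mulrA //; lia.
Qed.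
End HbarCommutation.

Lemma hJinvE k : hJinv k = \prod_(j <- rev (iota 1 k.-1) ++ iota 1 k.-1) ri j.
Proof. by rewrite /hJinv -map_cat big_map. Qed.

Lemma commr_hJinv Y k :
  (forall j, (0 < j)%N -> (j < k)%N -> GRing.comm Y (ri j)) -> GRing.comm Y (hJinv k).
Proof.
move=> hY; rewrite hJinvE big_seq; apply: commr_prod => j.
by rewrite mem_cat mem_rev orbb mem_iota => hj; apply: hY; lia.
Qed.

Lemma hJinv_near k j : (0 < j)%N -> (j.+1 < k <= n.+1)%N -> GRing.comm (hJinv k) (ri j).
Proof.
elim: k j => // k IH j hj hjk; have hk0 : (0 < k)%N by lia.
case: (ltnP j.+1 k) => hjk'.
  rewrite hJinvS // /GRing.comm -!mulrA -(rV_far (j := j) (k := k)); try lia.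
  by rewrite (mulrA (hJinv k)) IH; try lia; rewrite !mulrA (rV_far (j := j)); try lia.
have -> : k = j.+1 by lia.
have hj1 : (0 < j.+1 <= n)%N by lia.
have hj0 : (0 < j <= n)%N by lia.
have hjn : (j < n)%N by lia.
have brV := braidV (r_rV hj0) (rV_r hj0) (r_rV hj1) (rV_r hj1) (r_braid hj hjn).
have cJ : GRing.comm (ri j.+1) (hJinv j).
  by apply: commr_hJinv => i hi hij; apply/commr_sym/rV_far; lia.
rewrite !hJinvS // /GRing.comm !mulrA brV -(mulrA _ (ri j.+1) (hJinv j)) cJ -!mulrA.
by congr (_ * (_ * (_ * _))); rewrite !mulrA brV.
Qed.

Section WeylRelations.
Local Notation Mbar := (hbar m).
Local Notation Dbar := (hbar d).

Definition Dprod k := \prod_(j <- rev (iota 1 k)) Dbar j.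

Lemma Dprod0 : Dprod 0 = 1.
Proof. by rewrite /Dprod big_nil. Qed.

Lemma DprodS k : Dprod k.+1 = Dbar k.+1 * Dprod k.
Proof. by rewrite /Dprod (iotaSr 1 k) add1n rev_rcons big_cons. Qed.

Lemma Dprod_far k j : (k < j <= n)%N -> GRing.comm (Dprod k) (r j).
Proof.
move=> hkj; apply: commr_sym; rewrite /Dprod big_seq; apply: commr_prod => i.
by rewrite mem_rev mem_iota => hi; apply/commr_sym/hbar_far => //; lia.
Qed.

Lemma Dprod_rV_far k j : (k < j <= n)%N -> GRing.comm (Dprod k) (ri j).
Proof.
move=> hkj; have hj : (0 < j <= n)%N by lia.
exact/(commr_inv (r_rV hj) (rV_r hj))/Dprod_far.
Qed.

Lemma rr_rV k : (0 < k)%N -> (k < n)%N -> r k * r k.+1 * ri k = ri k.+1 * (r k * r k.+1).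
Proof.
move=> h0 h1; have hk : (0 < k <= n)%N by lia.
have hk1 : (0 < k.+1 <= n)%N by lia.
by rewrite (braid_conj (r_rV hk) (rV_r hk1) (r_braid h0 h1)) !mulrA.
Qed.

Lemma rr_rVrV k : (0 < k)%N -> (k < n)%N -> r k * r k.+1 * (ri k.+1 * ri k) = 1.
Proof.
move=> h0 h1; have hk : (0 < k <= n)%N by lia.
have hk1 : (0 < k.+1 <= n)%N by lia.
by rewrite mulrA (mulr_cancel _ (r_rV hk1)) r_rV.
Qed.

Lemma rVrV_rr k : (0 < k)%N -> (k < n)%N -> ri k.+1 * ri k * (r k * r k.+1) = 1.
Proof.
move=> h0 h1; have hk : (0 < k <= n)%N by lia.
have hk1 : (0 < k.+1 <= n)%N by lia.
by rewrite mulrA (mulr_cancel _ (rV_r hk)) rV_r.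
Qed.

Lemma weyl_bar k : (0 < k <= n)%N ->
  Dbar k * Mbar k.+1 = ri k + Mbar k.+1 * Dbar k * ri k * ri k.
Proof.
elim: k => // -[_ hk | k IH hk].
  by rewrite (hbarS m (k := 1)) // !hbar1; apply: weyl_rel; lia.
have h0 : (0 < k.+1)%N by [].
have h1 : (k.+1 < n)%N by lia.
have := congr1 (conjr (r k.+1 * r k.+2) (ri k.+2 * ri k.+1)) (IH (_ : (0 < k.+1 <= n)%N)).
have conjrM' := conjrM (rVrV_rr h0 h1).
have conjr_eq := conjr_intertwine (rr_rVrV h0 h1).
rewrite !conjrM' conjrD !conjrM' (conjr_eq _ _ (hbar_shift d_r h0 h1)).
by rewrite (conjr_eq _ _ (hbar_shiftS m_r h0 h1)) (conjr_eq _ _ (rr_rV h0 h1)); apply; lia.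
Qed.

Lemma refl_bar k : (0 < k <= n)%N ->
  ri k * Dbar k * ri k * Dbar k = Dbar k * ri k * Dbar k * ri k.
Proof.
elim: k => // -[_ hk | k IH hk]; first by rewrite !hbar1; apply: refl_d; lia.
have h0 : (0 < k.+1)%N by [].
have h1 : (k.+1 < n)%N by lia.
have := congr1 (conjr (r k.+1 * r k.+2) (ri k.+2 * ri k.+1)) (IH (_ : (0 < k.+1 <= n)%N)).
have conjr_eq := conjr_intertwine (rr_rVrV h0 h1).
rewrite !(conjrM (rVrV_rr h0 h1)) (conjr_eq _ _ (hbar_shift d_r h0 h1)).
by rewrite (conjr_eq _ _ (rr_rV h0 h1)); apply; lia.
Qed.

Lemma commr_Dprod_hJinv_Dbar k : (k <= n)%N ->
  GRing.comm (Dprod k * hJinv k.+1) (Dbar k.+1).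
Proof.
elim: k => [_|k IH hk]; first by rewrite Dprod0 hJinv1 mulr1; apply/commr_sym/commr1.
have hk1 : (0 < k.+1 <= n)%N by lia.
have cD : GRing.comm (Dprod k) (ri k.+1) by apply: Dprod_rV_far; lia.
have IH' := IH (ltnW hk).
have eDJ : Dprod k.+1 * hJinv k.+2 =
           Dbar k.+1 * ri k.+1 * (Dprod k * hJinv k.+1) * ri k.+1.
  by rewrite DprodS hJinvS // !mulrA -(mulrA _ (Dprod k)) cD !mulrA.
have refl' : r k.+1 * Dbar k.+1 * ri k.+1 * Dbar k.+1 * ri k.+1 =
              Dbar k.+1 * ri k.+1 * Dbar k.+1.
  by rewrite -!(mulrA (r k.+1)) -refl_bar // !mulrA r_rV // mul1r.
rewrite /GRing.comm eDJ (hbarS d (k := k.+1)) //.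
move: (Dprod k * hJinv k.+1) IH' => P IH'.
transitivity (Dbar k.+1 * ri k.+1 * Dbar k.+1 * P * ri k.+1).
  by rewrite !mulrA (mulr_cancel _ (rV_r hk1)) -(mulrA _ P) IH' !mulrA.
by rewrite !mulrA refl'.
Qed.

Fixpoint Mbar_defect k :=
  if k is k'.+1 then
    Dprod k' * hJinv k'.+1 * ri k'.+1 + Dbar k'.+1 * r k'.+1 * Mbar_defect k' * ri k'.+1
  else 0.

Lemma Dprod_Mbar k : (k <= n)%N ->
  Dprod k * Mbar k.+1 = Mbar k.+1 * Dprod k * hJinv k.+1 + Mbar_defect k.
Proof.
elim: k => [_|k IH hk]; first by rewrite Dprod0 hJinv1 mul1r !mulr1 addr0.
have hk1 : (0 < k.+1 <= n)%N by lia.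
have cD : GRing.comm (Dprod k) (r k.+1) by apply: Dprod_far; lia.
have cDi : GRing.comm (Dprod k) (ri k.+1) by apply: Dprod_rV_far; lia.
have -> : Dprod k.+1 * Mbar k.+2 = Dbar k.+1 * r k.+1 * (Dprod k * Mbar k.+1) * ri k.+1.
  by rewrite DprodS (hbarS m (k := k.+1)) // !mulrA -(mulrA _ (Dprod k)) cD !mulrA.
rewrite IH 1?ltnW // mulrDr mulrDl !mulrA -(mulrA _ (r k.+1) (Mbar k.+1)) r_hbar //.
rewrite mulrA weyl_bar // !mulrDl (rV_r hk1) mul1r (mulr_cancel _ (rV_r hk1)).
rewrite -(mulrA _ (ri k.+1) (Dprod k)) -cDi /= DprodS (hJinvS (k := k.+1)) // !mulrA.
by rewrite addrCA addrA.
Qed.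

Lemma c_mid x y z : c * (x * y * z) = x * (c * y) * z.
Proof. by rewrite !mulrA (c_central x) -(mulrA x c). Qed.

Lemma Mbar_defect_Dbar k : (k <= n)%N ->
  c * (Mbar_defect k * Dbar k.+1) = Dprod k - Dprod k * hJinv k.+1.
Proof.
elim: k => [_|k IH hk]; first by rewrite /= mul0r mulr0 Dprod0 hJinv1 mulr1 subrr.
have hk1 : (0 < k.+1 <= n)%N by lia.
have cD : GRing.comm (Dprod k) (r k.+1) by apply: Dprod_far; lia.
have e1 : Dprod k * hJinv k.+1 * ri k.+1 * Dbar k.+2 =
          Dbar k.+1 * (Dprod k * hJinv k.+1) * ri k.+1.
  rewrite (hbarS d (k := k.+1)) // !mulrA (mulr_cancel _ (rV_r hk1)).
  by rewrite (commr_Dprod_hJinv_Dbar (ltnW hk)) !mulrA.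
have e2 : Dbar k.+1 * r k.+1 * Mbar_defect k * ri k.+1 * Dbar k.+2 =
          Dbar k.+1 * r k.+1 * (Mbar_defect k * Dbar k.+1) * ri k.+1.
  by rewrite (hbarS d (k := k.+1)) // !mulrA (mulr_cancel _ (rV_r hk1)).
have e3 : Dbar k.+1 * r k.+1 * (Dprod k - Dprod k * hJinv k.+1) * ri k.+1 =
          Dbar k.+1 * Dprod k - Dbar k.+1 * Dprod k * (ri k.+1 + c) * hJinv k.+1 * ri k.+1.
  rewrite mulrBr mulrBl !mulrA -!(mulrA _ (r k.+1) (Dprod k)) -cD !mulrA.
  by rewrite (mulr_cancel _ (r_rV hk1)) -hecke_rV.
rewrite /= mulrDl mulrDr e1 e2 !c_mid (IH (ltnW hk)) e3 DprodS (hJinvS (k := k.+1)) //.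
rewrite mulrDr !mulrDl opprD addrCA -!mulrA (mulrA c (Dprod k)) (c_central (Dprod k)).
by rewrite -mulrA (addrC (- _) (- _)) addNKr.
Qed.

Lemma Dprod_Lbar k : (k <= n)%N ->
  Dprod k * (Mbar k.+1 * Dbar k.+1 + ic * (hJinv k.+1 - 1)) =
  Mbar k.+1 * Dbar k.+1 * (Dprod k * hJinv k.+1).
Proof.
move=> hk.
have eT : Mbar_defect k * Dbar k.+1 = ic * (Dprod k - Dprod k * hJinv k.+1).
  by rewrite -Mbar_defect_Dbar // mulrA (ic_central c) c_ic mul1r.
rewrite mulrDr mulrA Dprod_Mbar // mulrDl eT -(mulrA _ (Dprod k) (hJinv k.+1)).
rewrite -(mulrA (Mbar k.+1)) commr_Dprod_hJinv_Dbar // mulrA.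
rewrite (mulrA (Dprod k) ic) -(ic_central (Dprod k)) -(mulrA ic) (mulrBr (Dprod k)) mulr1.
rewrite -addrA -mulrDr.
by rewrite (addrA (Dprod k - _)) subrK subrr mulr0 addr0.
Qed.

Lemma weyl_product k : (k <= n)%N ->
  Mbar 1 * Dbar 1 * \prod_(j <- iota 2 k) (Mbar j * Dbar j + ic * (hJinv j - 1)) =
  \prod_(j <- iota 1 k.+1) Mbar j * (Dprod k.+1 * \prod_(j <- iota 1 k.+1) hJinv j).
Proof.
elim: k => [_|k IH hk]; first by rewrite /= !big_seq1 big_nil DprodS Dprod0 hJinv1 !mulr1.
set Jp := \prod_(j <- iota 1 k.+1) hJinv j.
set Y := Mbar k.+2 * Dbar k.+2 + ic * (hJinv k.+2 - 1).
have cJp x : (forall j, (0 < j <= k)%N -> GRing.comm x (ri j)) -> GRing.comm x Jp.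
  move=> hx; rewrite /Jp big_seq; apply: commr_prod => i; rewrite mem_iota => hi.
  by apply: commr_hJinv => j hj hji; apply: hx; lia.
have cYJp : GRing.comm Y Jp.
  apply: cJp => j hj; have hj' : (0 < j <= n)%N by lia.
  have cinv x : GRing.comm x (r j) -> GRing.comm x (ri j) := commr_inv (r_rV hj') (rV_r hj').
  apply: commr_sym; apply: commrD; first apply: commrM.
  - by apply/commr_sym/cinv/(hbar_near m_r); lia.
  - by apply/commr_sym/cinv/(hbar_near d_r); lia.
  - apply: commrM; first exact/commr_sym/ic_central.
    apply: commrB; last exact: commr1.
    by apply/commr_sym/hJinv_near; lia.
have cJJp : GRing.comm (hJinv k.+2) Jp by apply: cJp => j hj; apply: hJinv_near; lia.
rewrite (iotaSr 2 k) prodr_rcons mulrA IH 1?ltnW // add2n -/Y.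
rewrite (iotaSr 1 k.+1) !prodr_rcons add1n -/Jp (DprodS k.+1).
rewrite -(mulrA _ _ Y) -(mulrA (Dprod k.+1)) -cYJp (mulrA (Dprod k.+1)) Dprod_Lbar //.
by rewrite -cJJp !mulrA.
Qed.
End WeylRelations.
End HeckeWeyl.

(** * Operators on tensor powers as matrices *)

Lemma funext2 (T U W : Type) (f g : T -> U -> W) : (forall a b, f a b = g a b) -> f = g.
Proof.
by move=> h; apply: functional_extensionality => a; apply: functional_extensionality.
Qed.

Section OperatorMatrix.
Variables (N : nat) (A : algType C) (n : nat).
Definition op_mx (X : op N A n) : 'M[A]_#|{: idx N n}| :=
  \matrix_(i, j) X (enum_val i) (enum_val j).

Lemma op_mxM X Y : op_mx (opmul X Y) = op_mx X * op_mx Y.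
Proof.
apply/matrixP => i j; rewrite !mxE /opmul.
rewrite (big_enum_val (A := {: idx N n}) (fun c => X (enum_val i) c * Y c (enum_val j))) /=.
by apply: eq_bigr => k _; rewrite !mxE.
Qed.
Lemma op_mx1 : op_mx opone = 1.
Proof. by apply/matrixP => i j; rewrite !mxE /opone (inj_eq enum_val_inj). Qed.
Lemma op_mxD X Y : op_mx (opadd X Y) = op_mx X + op_mx Y.
Proof. by apply/matrixP => i j; rewrite !mxE. Qed.
Lemma op_mx_oprod s : op_mx (oprod s) = \prod_(x <- map op_mx s) x.
Proof. by elim: s => [|x s IH] /=; rewrite ?big_nil ?op_mx1 // big_cons op_mxM IH. Qed.
Lemma op_mx_scale_sub1 (c : C) X :
  op_mx (fun a b => c *: (X a b - opone a b)) = (c%:A)%:M * (op_mx X - 1).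
Proof.
apply/matrixP => i j; rewrite [(_%:M * _)]mul_scalar_mx !mxE /opone (inj_eq enum_val_inj).
by rewrite mulr_algl.
Qed.
Lemma op_mx_add1_scale (c : A) X :
  op_mx (fun a b => opone a b + c * X a b) = 1 + c%:M * op_mx X.
Proof.
by apply/matrixP => i j; rewrite [(_%:M * _)]mul_scalar_mx !mxE /opone (inj_eq enum_val_inj).
Qed.
Lemma alg_scalar_mx_comm (c : C) (Z : 'M[A]_#|{: idx N n}|) : GRing.comm (c%:A)%:M Z.
Proof.
apply/matrixP => i j; rewrite [(_%:M * _)]mul_scalar_mx !mxE.
rewrite (bigD1 j) //= big1 ?addr0; last by move=> k /negbTE hk; rewrite !mxE hk mulr0.
by rewrite !mxE eqxx mulr1n comm_alg.
Qed.
Lemma op_mx_inj : injective op_mx.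
Proof.
move=> X Y /matrixP eXY; apply: funext2 => a b.
by have := eXY (enum_rank a) (enum_rank b); rewrite !mxE !enum_rankK.
Qed.
End OperatorMatrix.

Section ScalarOperators.
Variables (N : nat) (A : algType C) (s : nat).
Definition alg_op (X : op N C s) : op N A s := fun a b => (X a b)%:A.
Lemma alg_opM X Y : alg_op (opmul X Y) = opmul (alg_op X) (alg_op Y).
Proof.
apply: funext2 => a b; rewrite /alg_op /opmul scaler_suml.
by apply: eq_bigr => c _; rewrite mulr_algl scalerA.
Qed.
Lemma alg_op1 : alg_op opone = opone.
Proof.
by apply: funext2 => a b; rewrite /alg_op /opone; case: (a == b); rewrite ?scale0r ?scale1r.
Qed.
Lemma alg_op_oprod l : alg_op (oprod l) = oprod (map alg_op l).
Proof. by elim: l => [|x l IH] /=; rewrite ?alg_op1 // alg_opM IH. Qed.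
Lemma alg_op_emb2 p p' (Y : rmat N) : alg_op (emb2 p p' Y) = emb2 p p' (liftR A Y).
Proof. by apply: funext2 => a b; rewrite /alg_op /emb2 /liftR; case: ifP; rewrite ?scale0r. Qed.
Lemma alg_op_add1_scale (c : C) X : alg_op (fun a b => opone a b + c * X a b) =
  (fun a b => opone a b + c%:A * alg_op X a b).
Proof.
apply: funext2 => a b; rewrite /alg_op scalerDl mulr_algl scalerA.
by rewrite -[(opone a b)%:A]/(alg_op opone a b) alg_op1.
Qed.
End ScalarOperators.

Lemma alg_op_Rk N (A : algType C) t (Y : rmat N) k :
  @alg_op N A t.+1 (Rk t Y k) = Rk t (liftR A Y) k.
Proof. exact: alg_op_emb2. Qed.

(* [widen X] acts as [X] on the tensor factors p, ..., p + t of (C^N)^(n+1) and as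
   the identity on the others; [window a] and [splice a c] read and overwrite the
   coordinates of a multi-index in these factors. *)
Section Window.
Variables (N : nat) (V : pzRingType) (n t p : nat).
Local Notation s := t.+1.
Hypothesis hps : (p + s <= n.+1)%N.

Definition in_window (i : 'I_n.+1) := (p <= i < p + s)%N.
Definition agree (a b : idx N n.+1) :=
  [forall i : 'I_n.+1, ~~ in_window i ==> (tnth a i == tnth b i)].
Definition window (a : idx N n.+1) : idx N s := [tuple tnth a (inord (p + i)%N) | i < s].
Definition splice (a : idx N n.+1) (c : idx N s) : idx N n.+1 :=
  [tuple if in_window i then tnth c (inord (i - p)%N) else tnth a i | i < n.+1].
Definition widen (X : op N V s) : op N V n.+1 :=
  fun a b => if agree a b then X (window a) (window b) else 0.

Lemma val_inord_shift (i : 'I_s) : nat_of_ord (inord (p + i)%N : 'I_n.+1) = (p + i)%N.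
Proof. by rewrite inordK //; have := ltn_ord i; lia. Qed.

Lemma in_window_shift (i : 'I_s) : in_window (inord (p + i)%N).
Proof. by rewrite /in_window val_inord_shift; have := ltn_ord i; lia. Qed.

Lemma val_inord_unshift (i : 'I_n.+1) :
  in_window i -> nat_of_ord (inord (i - p)%N : 'I_s) = (i - p)%N.
Proof. by rewrite /in_window => h; rewrite inordK //; lia. Qed.

Lemma inord_unshiftK (i : 'I_n.+1) :
  in_window i -> (inord (p + (inord (i - p)%N : 'I_s))%N : 'I_n.+1) = i.
Proof.
move=> h; apply: ord_inj; rewrite val_inord_shift val_inord_unshift //.
by move: h; rewrite /in_window; lia.
Qed.

Lemma tnth_window a i : tnth (window a) i = tnth a (inord (p + i)%N).
Proof. by rewrite tnth_mktuple. Qed.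

Lemma tnth_splice a c i :
  tnth (splice a c) i = if in_window i then tnth c (inord (i - p)%N) else tnth a i.
Proof. by rewrite tnth_mktuple. Qed.

Lemma window_splice a c : window (splice a c) = c.
Proof.
apply: eq_from_tnth => i; rewrite tnth_window tnth_splice in_window_shift.
by congr (tnth c _); apply: ord_inj; rewrite /= val_inord_shift inordK; have := ltn_ord i; lia.
Qed.

Lemma agree_splice a c : agree a (splice a c).
Proof. by apply/forallP => i; apply/implyP => hi; rewrite tnth_splice (negbTE hi). Qed.

Lemma splice_window a c : agree a c -> splice a (window c) = c.
Proof.
move/forallP => h; apply: eq_from_tnth => i; rewrite tnth_splice.
case: ifP => hi; first by rewrite tnth_window inord_unshiftK.
by apply/eqP; apply: (implyP (h i)); rewrite hi.
Qed.

Lemma agree_trans a b c : agree a b -> agree b c -> agree a c.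
Proof.
move=> /forallP h1 /forallP h2; apply/forallP => i; apply/implyP => hi.
by rewrite (eqP (implyP (h1 i) hi)) (implyP (h2 i) hi).
Qed.

Lemma agree_sym a b : agree a b -> agree b a.
Proof.
move=> /forallP h; apply/forallP => i; apply/implyP => hi.
by rewrite eq_sym (implyP (h i) hi).
Qed.

Lemma eq_agree_window a b : (a == b) = agree a b && (window a == window b).
Proof.
apply/idP/idP; first by move/eqP => ->; rewrite eqxx andbT; apply/forallP => i; apply/implyP.
case/andP => /forallP h /eqP hw; apply/eqP; apply: eq_from_tnth => i.
case: (boolP (in_window i)) => hi; last by apply/eqP; apply: (implyP (h i)).
by rewrite -(inord_unshiftK hi) -!tnth_window hw.
Qed.

Lemma widen_mul X Y : widen (opmul X Y) = opmul (widen X) (widen Y).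
Proof.
apply: funext2 => a b; rewrite /widen /opmul.
case: (boolP (agree a b)) => hab; last first.
  rewrite big1 // => c _.
  case: (boolP (agree a c)) => h1; case: (boolP (agree c b)) => h2; rewrite ?mul0r ?mulr0 //.
  by rewrite (agree_trans h1 h2) in hab.
rewrite (bigID (agree a)) /= [X in _ + X]big1 ?addr0; last by move=> c /negbTE ->; rewrite mul0r.
rewrite (reindex_onto (splice a) window (@splice_window a)).
rewrite (eq_bigl xpredT); last by move=> c; rewrite agree_splice window_splice eqxx.
apply: eq_bigr => c _; rewrite agree_splice window_splice.
by rewrite (agree_trans (agree_sym (agree_splice a c)) hab).
Qed.

Lemma widen_one : widen opone = opone.
Proof. by apply: funext2 => a b; rewrite /widen /opone eq_agree_window; case: (agree a b). Qed.

Lemma widen_oprod l : widen (oprod l) = oprod (map widen l).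
Proof. by elim: l => [|x l IH] /=; rewrite ?widen_one // widen_mul IH. Qed.

Lemma widen_add X Y : widen (fun a b => X a b + Y a b) = (fun a b => widen X a b + widen Y a b).
Proof. by apply: funext2 => a b; rewrite /widen; case: ifP; rewrite ?addr0. Qed.

Lemma widen_add_scale (c : V) X Y :
  widen (fun a b => X a b + c * Y a b) = (fun a b => widen X a b + c * widen Y a b).
Proof. by apply: funext2 => a b; rewrite /widen; case: ifP; rewrite ?mulr0 ?addr0. Qed.

Lemma agree_window_emb2_cond (a b : idx N n.+1) (i j : 'I_s) :
  agree a b &&
  [forall m : 'I_s, (m != i) && (m != j) ==> (tnth (window a) m == tnth (window b) m)] =
  [forall m : 'I_n.+1,
     (m != inord (p + i)%N) && (m != inord (p + j)%N) ==> (tnth a m == tnth b m)].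
Proof.
apply/idP/idP.
  case/andP => /forallP hag /forallP hin; apply/forallP => m; apply/implyP => /andP [hmi hmj].
  case: (boolP (in_window m)) => hw; last exact: (implyP (hag m)).
  have := implyP (hin (inord (m - p)%N)).
  rewrite !tnth_window inord_unshiftK //; apply; apply/andP; split.
    by apply: contra hmi => /eqP <-; rewrite inord_unshiftK.
  by apply: contra hmj => /eqP <-; rewrite inord_unshiftK.
move/forallP => h; apply/andP; split.
  apply/forallP => m; apply/implyP => hw; apply: (implyP (h m)); apply/andP; split.
    by apply: contra hw => /eqP ->; apply: in_window_shift.
  by apply: contra hw => /eqP ->; apply: in_window_shift.
apply/forallP => m; apply/implyP => /andP [hmi hmj]; rewrite !tnth_window; apply: (implyP (h _)).
apply/andP; split.
  apply: contra hmi => /eqP /(congr1 (@nat_of_ord _)); rewrite !val_inord_shift => e.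
  by apply/eqP/ord_inj => /=; lia.
apply: contra hmj => /eqP /(congr1 (@nat_of_ord _)); rewrite !val_inord_shift => e.
by apply/eqP/ord_inj => /=; lia.
Qed.

Lemma widen_emb2 (i j : 'I_s) Y :
  widen (emb2 i j Y) = emb2 (inord (p + i)%N) (inord (p + j)%N) Y.
Proof.
apply: funext2 => a b; rewrite /widen /emb2 -agree_window_emb2_cond !tnth_window.
by case: (agree a b) => //=; case: ifP.
Qed.
End Window.

Lemma emb1_emb2 N (V : pzRingType) n (p : 'I_n) (X : 'I_N -> 'I_N -> V) :
  emb1 p X = emb2 p p (fun i _ j _ => X i j).
Proof.
apply: funext2 => a b; rewrite /emb1 /emb2; congr (if _ then _ else _).
by apply: eq_forallb => m; rewrite andbb.
Qed.

Lemma widen_Rk N (V : pzRingType) n t p (Y : 'I_N -> 'I_N -> 'I_N -> 'I_N -> V) k :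
  (0 < k <= t)%N -> (p + t.+1 <= n.+1)%N -> @widen _ _ n t p (Rk t Y k) = Rk n Y (p + k)%N.
Proof.
move=> hk hps; rewrite /Rk widen_emb2 // !inordK; try lia.
by rewrite (_ : (p + k.-1)%N = (p + k).-1) //; lia.
Qed.

Lemma widen_emb1 N (V : pzRingType) n t p (X : 'I_N -> 'I_N -> V) :
  (p + t.+1 <= n.+1)%N -> @widen _ _ n t p (emb1 (n := t.+1) (inord 0) X) = emb1 (inord p) X.
Proof.
move=> hps; rewrite !emb1_emb2 widen_emb2 // inordK //.
by rewrite addn0.
Qed.

Section DisjointSupports.
Variables (N : nat) (V : pzRingType) (n : nat).
Lemma opmul_emb2_disjoint (p p' u u' : 'I_n) (Y Y' : 'I_N -> 'I_N -> 'I_N -> 'I_N -> V) a b :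
  u != p -> u != p' -> u' != p -> u' != p' ->
  opmul (emb2 p p' Y) (emb2 u u' Y') a b =
  if [forall m, (m != p) && (m != p') && (m != u) && (m != u') ==> (tnth a m == tnth b m)]
  then Y (tnth a p) (tnth a p') (tnth b p) (tnth b p') *
       Y' (tnth a u) (tnth a u') (tnth b u) (tnth b u')
  else 0.
Proof.
move=> h1 h2 h3 h4; rewrite /opmul /emb2.
pose cs : idx N n := [tuple if (i == p) || (i == p') then tnth b i else tnth a i | i < n].
have tcs i : tnth cs i = if (i == p) || (i == p') then tnth b i else tnth a i.
  by rewrite tnth_mktuple.
rewrite (bigD1 cs) //= big1 ?addr0.
  have -> : [forall m, (m != p) && (m != p') ==> (tnth a m == tnth cs m)].
    by apply/forallP => m; apply/implyP => /andP [hm1 hm2]; rewrite tcs (negbTE hm1) (negbTE hm2).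
  have -> : [forall m, (m != u) && (m != u') ==> (tnth cs m == tnth b m)] =
            [forall m, (m != p) && (m != p') && (m != u) && (m != u') ==> (tnth a m == tnth b m)].
    apply: eq_forallb => m; rewrite tcs.
    case: (eqVneq m p) => [->|hp] /=; first by rewrite eqxx implybT.
    by case: (eqVneq m p') => [->|hp'] /=; first by rewrite eqxx implybT.
  rewrite !tcs !eqxx /= orbT (negbTE h1) (negbTE h2) (negbTE h3) (negbTE h4) /=.
  by case: ifP; rewrite ?mulr0.
move=> c hc.
case: (boolP [forall m, (m != p) && (m != p') ==> (tnth a m == tnth c m)]) => /= hA;
  last by rewrite mul0r.
case: (boolP [forall m, (m != u) && (m != u') ==> (tnth c m == tnth b m)]) => /= hB;
  last by rewrite mulr0.
exfalso; move/negP: hc; apply; apply/eqP; apply: eq_from_tnth => i; rewrite tcs.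
move/forallP: hA => hA; move/forallP: hB => hB.
case: (boolP ((i == p) || (i == p'))) => hi.
  apply/eqP; apply: (implyP (hB i)); apply/andP; split.
    by apply: contraTneq hi => ->; rewrite negb_or h1 h2.
  by apply: contraTneq hi => ->; rewrite negb_or h3 h4.
by apply/esym/eqP; apply: (implyP (hA i)); rewrite -negb_or.
Qed.

Lemma emb2_disjoint_comm (p p' u u' : 'I_n) (Y Y' : 'I_N -> 'I_N -> 'I_N -> 'I_N -> V) :
  u != p -> u != p' -> u' != p -> u' != p' ->
  (forall i1 i2 i3 i4 j1 j2 j3 j4, GRing.comm (Y i1 i2 i3 i4) (Y' j1 j2 j3 j4)) ->
  opmul (emb2 p p' Y) (emb2 u u' Y') = opmul (emb2 u u' Y') (emb2 p p' Y).
Proof.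
move=> h1 h2 h3 h4 hc; apply: funext2 => a b.
rewrite !opmul_emb2_disjoint // 1?eq_sym // 1?eq_sym // 1?eq_sym //.
have -> : [forall m, (m != u) && (m != u') && (m != p) && (m != p') ==> (tnth a m == tnth b m)] =
          [forall m, (m != p) && (m != p') && (m != u) && (m != u') ==> (tnth a m == tnth b m)].
  by apply: eq_forallb => m; case: (m != u); case: (m != u'); case: (m != p); case: (m != p').
by case: ifP => // _; apply: hc.
Qed.
End DisjointSupports.

Section FirstFactor.
Variables (N : nat) (V : pzRingType).
Definition mprod (X Y : 'I_N -> 'I_N -> V) : 'I_N -> 'I_N -> V := fun i j => \sum_k X i k * Y k j.

Lemma inord0_1 : (inord 0 : 'I_1) = ord0.
Proof. by apply: ord_inj; rewrite inordK. Qed.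

Lemma emb1_1 (Z : 'I_N -> 'I_N -> V) (a b : idx N 1) :
  emb1 (inord 0) Z a b = Z (tnth a ord0) (tnth b ord0).
Proof.
rewrite /emb1 inord0_1.
have -> : [forall m : 'I_1, (m != ord0) ==> (tnth a m == tnth b m)].
  by apply/forallP => m; rewrite (ord1 m) eqxx.
by [].
Qed.

Lemma emb1_mul1 (X Y : 'I_N -> 'I_N -> V) :
  opmul (emb1 (n := 1) (inord 0) X) (emb1 (inord 0) Y) = emb1 (inord 0) (mprod X Y).
Proof.
apply: funext2 => a b; rewrite /opmul emb1_1 /mprod.
have bij : {on [pred c : idx N 1 | true], bijective (fun k : 'I_N => [tuple k])}.
  exists (fun c : idx N 1 => tnth c ord0) => // c _.
  by apply: eq_from_tnth => i; rewrite (ord1 i).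
rewrite (reindex _ bij) /=.
by apply: eq_bigr => k _; rewrite !emb1_1.
Qed.

Lemma emb1_mul n (X Y : 'I_N -> 'I_N -> V) :
  opmul (emb1 (n := n.+1) (inord 0) X) (emb1 (inord 0) Y) = emb1 (inord 0) (mprod X Y).
Proof.
have hps : (0 + 0.+1 <= n.+1)%N by [].
rewrite -!(widen_emb1 _ hps) -widen_mul //.
by rewrite emb1_mul1.
Qed.
End FirstFactor.

Lemma inord_neq n x y : x != y -> (x < n.+1)%N -> (y < n.+1)%N -> (inord x : 'I_n.+1) != inord y.
Proof.
move=> h hx hy; apply: contra h => /eqP /(congr1 (@nat_of_ord _)).
by rewrite !inordK // => ->.
Qed.

Section WindowMatrices.
Variables (N : nat) (A : algType C) (n t p : nat).
Hypothesis hps : (p + t.+1 <= n.+1)%N.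

Definition op_mx_at (Z : op N A t.+1) := op_mx (@widen N A n t p Z).

Lemma op_mx_atM X Y : op_mx_at (opmul X Y) = op_mx_at X * op_mx_at Y.
Proof. by rewrite /op_mx_at widen_mul // op_mxM. Qed.

Lemma op_mx_at1 : op_mx_at opone = 1.
Proof. by rewrite /op_mx_at widen_one // op_mx1. Qed.

Lemma op_mx_at_oprod l : op_mx_at (oprod l) = \prod_(x <- map op_mx_at l) x.
Proof. by rewrite /op_mx_at widen_oprod // op_mx_oprod -map_comp. Qed.

Lemma op_mx_atD X Y : op_mx_at (fun a b => X a b + Y a b) = op_mx_at X + op_mx_at Y.
Proof. by rewrite /op_mx_at widen_add -op_mxD. Qed.

Lemma op_mx_at_add1_scale (c : A) X :
  op_mx_at (fun a b => opone a b + c * X a b) = 1 + c%:M * op_mx_at X.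
Proof. by rewrite /op_mx_at widen_add_scale widen_one // op_mx_add1_scale. Qed.

Lemma op_mx_at_Rk Y k : (0 < k <= t)%N -> op_mx_at (Rk t Y k) = op_mx (Rk n Y (p + k)).
Proof. by move=> hk; rewrite /op_mx_at widen_Rk. Qed.

Lemma op_mx_at_emb1 X : op_mx_at (emb1 (inord 0) X) = op_mx (emb1 (inord p) X).
Proof. by rewrite /op_mx_at widen_emb1. Qed.
End WindowMatrices.

(** * Realization in matrices over W(R) *)

Lemma subr_invr_neq0 (F : fieldType) (x : F) : x != 0 -> x != 1 -> x != -1 -> x - x^-1 != 0.
Proof.
move=> x0 x1 xN1; rewrite subr_eq0; apply/eqP => e.
have : x ^+ 2 == 1 by rewrite expr2 {2}e mulfV.
by rewrite sqrf_eq1 (negbTE x1) (negbTE xN1).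
Qed.

Section Realization.
Variables (N : nat) (q : C) (R Ri : rmat N) (A : algType C) (M D : 'I_N -> 'I_N -> A) (n : nat).
Hypothesis hR : skew_invertible_Hecke q R Ri.
Hypothesis hW : weyl_relations R Ri M D.

Local Notation mx := (@op_mx N A n.+1).
Local Notation r k := (mx (Rk n (liftR A R) k)).
Local Notation ri k := (mx (Rk n (liftR A Ri) k)).
Local Notation m := (mx (emb1 (inord 0) M)).
Local Notation d := (mx (emb1 (inord 0) D)).

Lemma op_mx_at_alg_Rk t p (Y : rmat N) k : (p + t.+1 <= n.+1)%N -> (0 < k <= t)%N ->
  op_mx_at n p (alg_op A (Rk t Y k)) = op_mx (Rk n (liftR A Y) (p + k)).
Proof. by move=> hps hk; rewrite alg_op_Rk op_mx_at_Rk. Qed.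

Lemma Rk_inverse (Y Yi : rmat N) :
  (forall a b, opmul (emb2 (inord 0) (inord 1) Y) (emb2 (inord 0) (inord 1) Yi) a b =
               @opone N C 2 a b) ->
  forall k, (0 < k <= n)%N -> mx (Rk n (liftR A Y) k) * mx (Rk n (liftR A Yi) k) = 1.
Proof.
move=> hY k hk; have hps : (k.-1 + 2 <= n.+1)%N by lia.
have k0 : (0 < k)%N by lia.
have := congr1 (fun Z => op_mx_at n k.-1 (alg_op A Z))
  (funext2 hY : opmul (Rk 1 Y 1) (Rk 1 Yi 1) = opone).
by rewrite /= alg_opM alg_op1 op_mx_atM // op_mx_at1 // !op_mx_at_alg_Rk // addn1 prednK.
Qed.

Lemma Rk_hecke k : (0 < k <= n)%N -> r k * r k = 1 + ((q - q^-1)%:A)%:M * r k.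
Proof.
case: hR => _ _ _ hH _ hk; have hps : (k.-1 + 2 <= n.+1)%N by lia.
have k0 : (0 < k)%N by lia.
have := congr1 (fun Z => op_mx_at n k.-1 (alg_op A Z)) (funext2 hH).
rewrite /= alg_opM alg_op_add1_scale op_mx_atM // op_mx_at_add1_scale //.
by rewrite !op_mx_at_alg_Rk // addn1 prednK.
Qed.

Lemma Rk_braid k : (0 < k)%N -> (k < n)%N -> r k * r k.+1 * r k = r k.+1 * r k * r k.+1.
Proof.
case: hR => _ _ hB _ _ h0 h1; have hps : (k.-1 + 3 <= n.+1)%N by lia.
have := congr1 (fun Z => op_mx_at n k.-1 (alg_op A Z))
  (funext2 hB : oprod [:: Rk 2 R 1; Rk 2 R 2; Rk 2 R 1] = oprod [:: Rk 2 R 2; Rk 2 R 1; Rk 2 R 2]).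
cbv beta; rewrite !alg_op_oprod 2!(op_mx_at_oprod hps) !big_cons big_nil !mulr1.
rewrite (@op_mx_at_alg_Rk 2 k.-1 R 1 hps isT) (@op_mx_at_alg_Rk 2 k.-1 R 2 hps isT).
have -> : (k.-1 + 1 = k)%N by lia.
have -> : (k.-1 + 2 = k.+1)%N by lia.
by rewrite !mulrA.
Qed.

Lemma emb2_liftR_comm (p p' u u' : 'I_n.+1) (Y : rmat N) (Y' : 'I_N -> 'I_N -> 'I_N -> 'I_N -> A) :
  u != p -> u != p' -> u' != p -> u' != p' ->
  GRing.comm (mx (emb2 p p' (liftR A Y))) (mx (emb2 u u' Y')).
Proof.
move=> hu hu' hu'' hu'''; rewrite /GRing.comm -[LHS]op_mxM -[RHS]op_mxM.
by rewrite (emb2_disjoint_comm hu hu' hu'' hu''') // => *; apply: comm_alg.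
Qed.

Lemma Rk_far j k : (0 < j)%N -> (j.+1 < k <= n)%N -> GRing.comm (r j) (r k).
Proof.
move=> hj hjk; apply: emb2_liftR_comm.
all: by apply: inord_neq; lia.
Qed.

Lemma emb1_Rk_comm (X : 'I_N -> 'I_N -> A) k : (1 < k <= n)%N ->
  GRing.comm (mx (emb1 (inord 0) X)) (r k).
Proof.
move=> hk; rewrite (emb1_emb2 (inord 0) X).
apply: commr_sym; apply: emb2_liftR_comm.
all: by apply: inord_neq; lia.
Qed.

Section WeylWindow.
Hypothesis hn : (0 < n)%N.
Let hps : (0 + 2 <= n.+1)%N. Proof. by rewrite add0n ltnS. Qed.

Lemma op_mx_at_R1 (Y : rmat N) : op_mx_at n 0 (Rk 1 (liftR A Y) 1) = mx (Rk n (liftR A Y) 1).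
Proof. by rewrite (@op_mx_at_Rk N A n 1 0 hps (liftR A Y) 1 isT) add0n. Qed.

Lemma op_mx_at_M1 (X : 'I_N -> 'I_N -> A) :
  op_mx_at n 0 (emb1 (n := 2) (inord 0) X) = mx (emb1 (inord 0) X).
Proof. exact: (@op_mx_at_emb1 N A n 1 0 hps X). Qed.

Lemma op_mx_at_bar2 X :
  op_mx_at n 0 (bar 1 (liftR A R) (liftR A Ri) X 2) = r 1 * mx (emb1 (inord 0) X) * ri 1.
Proof.
rewrite /bar (op_mx_at_oprod hps) /= !big_cons big_nil mulr1 mulrA.
by rewrite op_mx_at_M1 !op_mx_at_R1.
Qed.

Lemma Rk_weyl : d * (r 1 * m * ri 1) = ri 1 + r 1 * m * ri 1 * d * ri 1 * ri 1.
Proof.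
case: hW => _ _ hWe.
have := congr1 (op_mx_at n 0) (funext2 hWe).
rewrite (op_mx_atM hps) op_mx_atD (op_mx_at_oprod hps) /= !big_cons big_nil mulr1.
by rewrite op_mx_at_bar2 op_mx_at_M1 op_mx_at_R1 !mulrA.
Qed.

Lemma Rk_refl : ri 1 * d * ri 1 * d = d * ri 1 * d * ri 1.
Proof.
case: hW => _ hD _.
have := congr1 (op_mx_at n 0) (funext2 hD).
rewrite 2!(op_mx_at_oprod hps) /= !big_cons big_nil !mulr1.
by rewrite op_mx_at_M1 op_mx_at_R1 !mulrA.
Qed.
End WeylWindow.

Lemma op_mx_bar X k :
  mx (bar n (liftR A R) (liftR A Ri) X k) =
  hbar (fun j => r j) (fun j => ri j) (mx (emb1 (inord 0) X)) k.
Proof. by rewrite /bar op_mx_oprod map_cat /= -!map_comp. Qed.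

Lemma op_mx_Jkinv k : mx (Jkinv n (liftR A Ri) k) = hJinv (fun j => ri j) k.
Proof. by rewrite /Jkinv /Jk op_mx_oprod map_cat -!map_comp. Qed.

Lemma op_mx_Lhat : mx (emb1 (inord 0) (Lhat M D)) = m * d.
Proof. by rewrite -op_mxM emb1_mul. Qed.

Hypotheses (hq0 : q != 0) (hq1 : q != 1) (hqm1 : q != -1).

Lemma op_mx_weyl_identity : mx (weyl_lhs q R Ri M D n) = mx (weyl_rhs R Ri M D n).
Proof.
have [h1 h2 _ _ _] := hR.
pose c : 'M[A]_#|{: idx N n.+1}| := ((q - q^-1)%:A)%:M.
pose ic : 'M[A]_#|{: idx N n.+1}| := ((q - q^-1)^-1%:A)%:M.
have c_ic : c * ic = 1.
  by rewrite /c /ic -mulmxE -scalar_mxM mulr_algl scalerA mulfV ?scale1r // subr_invr_neq0.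
have := weyl_product (Rk_inverse h1) (Rk_inverse h2) Rk_hecke Rk_braid Rk_far
  (emb1_Rk_comm M) (emb1_Rk_comm D) (alg_scalar_mx_comm _) (alg_scalar_mx_comm _) c_ic
  Rk_weyl Rk_refl (leqnn n).
have eL k : k \in iota 2 n ->
  mx (opadd (bar n (liftR A R) (liftR A Ri) (Lhat M D) k)
            (fun a b => (q - q^-1)^-1 *: (Jkinv n (liftR A Ri) k a b - opone a b))) =
  hbar (fun j => r j) (fun j => ri j) m k * hbar (fun j => r j) (fun j => ri j) d k +
  ic * (hJinv (fun j => ri j) k - 1).
  rewrite mem_iota => hk.
  rewrite op_mxD op_mx_bar op_mx_Lhat (hbarM (Rk_inverse h2)); last lia.
  by rewrite op_mx_scale_sub1 op_mx_Jkinv.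
rewrite /weyl_lhs /weyl_rhs; cbv zeta beta.
rewrite op_mxM op_mx_bar op_mx_Lhat (hbarM (Rk_inverse h2)) //.
rewrite op_mx_oprod -map_comp big_map (eq_big_seq _ eL).
rewrite op_mx_oprod !map_cat -!map_comp (eq_map (op_mx_bar M)) (eq_map (op_mx_bar D)).
by rewrite (eq_map op_mx_Jkinv) !big_cat !big_map.
Qed.

End Realization.

Theorem theorem1 (N : nat) (hN : (0 < N)%N) (q : C)
  (hq0 : q != 0) (hq1 : q != 1) (hqm1 : q != -1)
  (hgen : forall k : nat, (0 < k)%N -> q ^+ k != 1)
  (R Ri : rmat N) (hR : skew_invertible_Hecke q R Ri)
  (A : algType C) (M D : 'I_N -> 'I_N -> A) (hW : weyl_relations R Ri M D)
  (n : nat) :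
  forall a b : idx N n.+1, weyl_lhs q R Ri M D n a b = weyl_rhs R Ri M D n a b.
Proof.
move=> a b; congr (_ a b); apply: op_mx_inj.
exact: op_mx_weyl_identity.
Qed.
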